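(* Let $G$ be a graph. The following are equivalent: (a1) $M_1(G)$ is a non-trivial matroid and $G$ is a connected cacti-graph; (a2) $M_1(G)$ is a connected matroid.
   Context: Graphs are finite, may have loops and parallel edges, and have no isolated vertices. A leaf is a vertex incident to exactly one edge, which is not a loop. A cacti-graph is a graph with no isolated vertices, no leaves, and no component that is a cycle. For $X\subseteq E(G)$, $G\langle X\rangle$ is the subgraph with edge set $X$ and vertex set the vertices incident to $X$. $M_1(G)$ is the matroid on $E(G)$ whose circuits are the inclusion-minimal members of $\{C\subseteq E(G):C\neq\emptyset,\ |C|=|V(G\langle C\rangle)|+1\}$. A matroid is non-trivial if it has at least one circuit and at least one cocircuit; it is connected if its ground set has at least two elements and every two elements lie in a common circuit. *)

From mathcomp Require Import all_boot.
Set Implicit Arguments. Unset Strict Implicit. Unset Printing Implicit Defensive.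

(* A finite graph with loops and parallel edges: vertex type V, edge type E,
   and each edge e has (unordered) ends (ends e).1, (ends e).2;
   e is a loop iff both ends coincide. V(G) = all of V. *)

Definition incident (V E : finType) (ends : E -> V * V) (v : V) (e : E) : bool :=
  ((ends e).1 == v) || ((ends e).2 == v).

Definition is_loop (V E : finType) (ends : E -> V * V) (e : E) : bool :=
  (ends e).1 == (ends e).2.

Definition no_isolated (V E : finType) (ends : E -> V * V) : Prop :=
  forall v : V, exists e : E, incident ends v e.

Definition is_leaf (V E : finType) (ends : E -> V * V) (v : V) : Prop :=
  exists e : E, [set f | incident ends v f] = [set e] /\ ~~ is_loop ends e.

Definition adj (V E : finType) (ends : E -> V * V) : rel V :=
  fun u w => [exists e, ((ends e == (u, w)) || (ends e == (w, u)))].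

Definition component (V E : finType) (ends : E -> V * V) (v : V) : {set V} :=
  [set u | connect (adj ends) v u].

(* edges of the subgraph induced on a vertex set K (for components this is
   exactly the edge set of the component) *)
Definition comp_edges (V E : finType) (ends : E -> V * V) (K : {set V}) : {set E} :=
  [set e | ((ends e).1 \in K) && ((ends e).2 \in K)].

(* The component with vertex set K is a cycle: distinct vertices
   v_0..v_n and distinct edges e_0..e_n with e_i joining v_i and v_{i+1 mod n+1},
   and these are all the vertices and edges of the component.
   (n = 0: a single loop; n = 1: two parallel edges.) *)
Definition is_cycle_comp (V E : finType) (ends : E -> V * V) (K : {set V}) : Prop :=
  exists (n : nat) (f : 'I_n.+1 -> V) (g : 'I_n.+1 -> E),
    [/\ injective f, injective g,
        (forall i, ends (g i) = (f i, f (ordS i)) \/ ends (g i) = (f (ordS i), f i)),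
        K = f @: setT & comp_edges ends K = g @: setT].

Definition cacti_graph (V E : finType) (ends : E -> V * V) : Prop :=
  [/\ no_isolated ends,
      (forall v : V, ~ is_leaf ends v) &
      (forall v : V, ~ is_cycle_comp ends (component ends v))].

Definition graph_connected (V E : finType) (ends : E -> V * V) : Prop :=
  forall u w : V, connect (adj ends) u w.

Definition vset (V E : finType) (ends : E -> V * V) (X : {set E}) : {set V} :=
  [set v | [exists e in X, incident ends v e]].

Definition M1_circuit (V E : finType) (ends : E -> V * V) (C : {set E}) : bool :=
  minset (fun X : {set E} => (X != set0) && (#|X| == #|vset ends X| + 1)) C.

Definition m_indep (E : finType) (circ : {set E} -> bool) (X : {set E}) : bool :=
  [forall C : {set E}, circ C ==> ~~ (C \subset X)].

Definition m_basis (E : finType) (circ : {set E} -> bool) (B : {set E}) : bool :=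
  maxset (m_indep circ) B.

Definition m_cocircuit (E : finType) (circ : {set E} -> bool) (D : {set E}) : bool :=
  minset (fun X : {set E} => [forall B : {set E}, m_basis circ B ==> (X :&: B != set0)]) D.

Definition m_nontrivial (E : finType) (circ : {set E} -> bool) : Prop :=
  (exists C, circ C) /\ (exists D, m_cocircuit circ D).

Definition m_connected (E : finType) (circ : {set E} -> bool) : Prop :=
  1 < #|E| /\
  forall e f : E, e != f -> exists C, [/\ circ C, e \in C & f \in C].

From mathcomp Require Import all_boot zify.
Set Implicit Arguments. Unset Strict Implicit. Unset Printing Implicit Defensive.

(* The excess #|X| - #|V(G<X>)| of an edge set is supermodular, so every edge set
   of positive excess contains a circuit of M_1(G) and circuits satisfy weak
   elimination; the usual matroid arguments then make "lying in a common circuit"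
   transitive.
   (a2) -> (a1): a circuit spans a connected subgraph, so G is connected; a circuit
   through a leaf edge, or inside a cycle component, would have at least as many
   vertices as edges; every edge lies in a circuit, so singletons are independent
   and E meets every basis.
   (a1) -> (a2): by a degree count, minimum degree 2 leaves no coloop, so every edge
   lies in a circuit; circuits sharing a vertex are linked through a third circuit,
   and connectivity of G spreads the relation to all pairs of edges. *)

Lemma ltn_card_missing (T : finType) (A B : {set T}) x :
  A \subset B -> x \in B -> x \notin A -> #|A| < #|B|.
Proof. by move=> AB xB xA; apply/proper_card/properP; split=> //; exists x. Qed.

Section CircuitElimination.
Variables (E : finType) (circ : {set E} -> bool).

Definition share_circuit (a b : E) := [exists C, [&& circ C, a \in C & b \in C]].

Lemma share_circuitP a b :
  reflect (exists C, [/\ circ C, a \in C & b \in C]) (share_circuit a b).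
Proof.
apply: (iffP existsP) => -[C].
  by case/and3P=> HC aC bC; exists C.
by case=> HC aC bC; exists C; apply/and3P.
Qed.

Lemma share_circuit_sym a b : share_circuit a b -> share_circuit b a.
Proof. by case/share_circuitP=> C [HC aC bC]; apply/share_circuitP; exists C. Qed.

Lemma m_cocircuit_exists e : m_indep circ [set e] -> exists D, m_cocircuit circ D.
Proof.
move=> ind_e; pose meets_bases X := [forall B, m_basis circ B ==> (X :&: B != set0)].
have : meets_bases [set: E].
  apply/forallP=> B; apply/implyP=> /maxsetP[_ maxB]; rewrite setTI.
  apply/negP=> /eqP B0; have := maxB _ ind_e; rewrite B0 sub0set => /(_ isT).
  by move/setP/(_ e); rewrite !inE eqxx.
by case/minset_exists=> D minD _; exists D.
Qed.

Hypothesis circ_clutter : forall C D, circ C -> circ D -> D \subset C -> D = C.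
Hypothesis circ_elim : forall C1 C2 x, circ C1 -> circ C2 -> C1 != C2 ->
  x \in C1 -> x \in C2 -> exists2 C3, circ C3 & C3 \subset (C1 :|: C2) :\ x.

Lemma circuit_meets_outside C C' D a : circ C -> circ C' -> C' \subset C :|: D ->
  a \in C -> a \notin C' -> exists g, [/\ g \in C', g \in D & g \notin C].
Proof.
move=> HC HC' sub aC aC'.
have [g /and3P[gC' gD gC] | none] := pickP [pred g | [&& g \in C', g \in D & g \notin C]].
  by exists g.
suff C'C : C' \subset C by move: aC'; rewrite (circ_clutter HC HC' C'C) aC.
apply/subsetP=> g gC'; move: (subsetP sub g gC') (none g); rewrite !inE /= gC'.
by case: (g \in C) => //= ->.
Qed.

Lemma strong_circuit_elim C1 C2 e f : circ C1 -> circ C2 ->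
  e \in C1 -> e \in C2 -> f \in C1 -> f \notin C2 ->
  exists2 C, circ C & [&& f \in C, C \subset C1 :|: C2 & e \notin C].
Proof.
have [n] := ubnP #|C1 :|: C2|; elim: n => // n IH in C1 C2 e f *.
rewrite ltnS => Hn H1 H2 eC1 eC2 fC1 fC2.
have C12 : C1 != C2 by apply/eqP=> C12; rewrite -C12 fC1 in fC2.
have [C3 H3] := circ_elim H1 H2 C12 eC1 eC2; rewrite subsetD1 => /andP[sub3 eC3].
have [fC3 | fC3] := boolP (f \in C3); first by exists C3; rewrite ?fC3 ?sub3.
have [g [gC3 gC2 gC1]] := circuit_meets_outside H1 H3 sub3 eC1 eC3.
have sub23 : C2 :|: C3 \subset C1 :|: C2 by rewrite subUset subsetUr.
have lt23 : #|C2 :|: C3| < n.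
  apply: leq_trans _ Hn; apply: (ltn_card_missing (x := f)) sub23 _ _; rewrite !inE ?fC1 //.
  by rewrite (negbTE fC2) (negbTE fC3).
have [C4 H4 /and3P[eC4 sub4 gC4]] := IH C2 C3 g e lt23 H2 H3 gC2 gC3 eC2 eC3.
have fC4 : f \notin C4 by apply/negP=> /(subsetP sub4); rewrite inE (negbTE fC2) (negbTE fC3).
have sub14 : C1 :|: C4 \subset C1 :|: C2 by rewrite subUset subsetUl (subset_trans sub4 sub23).
have lt14 : #|C1 :|: C4| < n.
  apply: leq_trans _ Hn; apply: (ltn_card_missing (x := g)) sub14 _ _.
    by rewrite !inE gC2 orbT.
  by rewrite !inE (negbTE gC1) (negbTE gC4).
have [C5 H5 /and3P[fC5 sub5 eC5]] := IH C1 C4 e f lt14 H1 H4 eC1 eC4 fC1 fC4.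
by exists C5; rewrite ?fC5 ?eC5 ?(subset_trans sub5 sub14).
Qed.

Lemma share_circuit_of_meet C1 C2 x y z : circ C1 -> circ C2 ->
  y \in C1 -> y \in C2 -> x \in C1 -> z \in C2 -> share_circuit x z.
Proof.
have [n] := ubnP #|C1 :|: C2|; elim: n => // n IH in C1 C2 x y z *.
rewrite ltnS => Hn H1 H2 yC1 yC2 xC1 zC2.
have [zC1 | zC1] := boolP (z \in C1); first by apply/share_circuitP; exists C1.
have [xC2 | xC2] := boolP (x \in C2); first by apply/share_circuitP; exists C2.
have [C3 H3 /and3P[zC3 sub3 yC3]] := strong_circuit_elim H2 H1 yC2 yC1 zC2 zC1.
have [xC3 | xC3] := boolP (x \in C3); first by apply/share_circuitP; exists C3.
have [w [wC3 wC1 wC2]] := circuit_meets_outside H2 H3 sub3 yC2 yC3.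
have [C4 H4 /and3P[xC4 sub4 wC4]] := strong_circuit_elim H1 H3 wC1 wC3 xC1 xC3.
have [y' [y'C4 y'C3 y'C1]] := circuit_meets_outside H1 H4 sub4 wC1 wC4.
have y'C2 : y' \in C2 by move: (subsetP sub3 y' y'C3); rewrite inE (negbTE y'C1) orbF.
have sub42 : C4 :|: C2 \subset C1 :|: C2.
  by rewrite subUset subsetUr andbT (subset_trans sub4) // subUset subsetUl setUC.
have lt42 : #|C4 :|: C2| < n.
  apply: leq_trans _ Hn; apply: (ltn_card_missing (x := w)) sub42 _ _; rewrite !inE ?wC1 //.
  by rewrite (negbTE wC4) (negbTE wC2).
exact: IH lt42 H4 H2 y'C4 y'C2 xC4 zC2.
Qed.

Lemma share_circuit_trans a b c :
  share_circuit a b -> share_circuit b c -> share_circuit a c.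
Proof.
case/share_circuitP=> C1 [H1 aC1 bC1] /share_circuitP[C2 [H2 bC2 cC2]].
exact: share_circuit_of_meet H1 H2 bC1 bC2 aC1 cC2.
Qed.

End CircuitElimination.

Section M1Circuits.
Variables (V E : finType) (ends : E -> V * V).
Local Notation vs := (vset ends).
Local Notation circ := (M1_circuit ends).

Lemma vsetS (A B : {set E}) : A \subset B -> vs A \subset vs B.
Proof.
move=> AB; apply/subsetP=> v; rewrite !inE => /existsP[e /andP[eA ve]].
by apply/existsP; exists e; rewrite (subsetP AB).
Qed.

Lemma vsetU (A B : {set E}) : vs (A :|: B) = vs A :|: vs B.
Proof.
apply/setP=> v; rewrite !inE; apply/existsP/orP => [[e]|].
  by rewrite inE => /andP[/orP[] eX ve]; [left | right]; apply/existsP; exists e; rewrite eX.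
by case=> /existsP[e /andP[eX ve]]; exists e; rewrite inE eX ?orbT.
Qed.

Lemma vset0 : vs set0 = set0.
Proof. by apply/setP=> v; rewrite !inE; apply/existsP=> -[e]; rewrite inE. Qed.

Lemma vset1 e : vs [set e] = [set (ends e).1; (ends e).2].
Proof.
apply/setP=> v; rewrite !inE; apply/existsP/idP => [[f]|ve].
  by rewrite inE /incident => /andP[/eqP-> /orP[]/eqP->]; rewrite eqxx ?orbT.
by exists e; rewrite inE eqxx /incident; case/orP: ve => /eqP->; rewrite eqxx ?orbT.
Qed.

Lemma vsetT : no_isolated ends -> vs setT = setT.
Proof.
move=> noiso; apply/setP=> v; have [e ve] := noiso v.
by rewrite in_setT inE; apply/existsP; exists e; rewrite in_setT.
Qed.

Lemma ends_in_vset e (X : {set E}) :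
  e \in X -> ((ends e).1 \in vs X) && ((ends e).2 \in vs X).
Proof.
by move=> eX; rewrite !inE; apply/andP; split; apply/existsP; exists e;
  rewrite eX /incident eqxx ?orbT.
Qed.

Lemma card_vset_gt0 (X : {set E}) : X != set0 -> 0 < #|vs X|.
Proof.
by case/set0Pn=> e /ends_in_vset /andP[v1 _]; apply/card_gt0P; exists (ends e).1.
Qed.

Lemma vsetI_sub (A B : {set E}) : vs (A :&: B) \subset vs A :&: vs B.
Proof. by rewrite subsetI !vsetS ?subsetIl ?subsetIr. Qed.

Lemma cardsUI_vset (A B : {set E}) :
  #|A :|: B| + #|A :&: B| + #|vs A| + #|vs B| =
  #|A| + #|B| + #|vs (A :|: B)| + #|vs A :&: vs B|.
Proof. by have := cardsUI A B; have := cardsUI (vs A) (vs B); rewrite vsetU; lia. Qed.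

Definition touches (X : {set E}) (g : E) :=
  ((ends g).1 \in vs X) || ((ends g).2 \in vs X).

Lemma touchesP (X : {set E}) g :
  reflect (exists2 v, v \in vs X & incident ends v g) (touches X g).
Proof.
apply: (iffP orP) => [[] gX | [v vX /orP[]/eqP vg]].
- by exists (ends g).1; rewrite // /incident eqxx.
- by exists (ends g).2; rewrite // /incident eqxx orbT.
- by left; rewrite vg.
- by right; rewrite vg.
Qed.

Lemma card_vset_setU1 (S : {set E}) g : touches S g -> #|vs (g |: S)| <= #|vs S|.+1.
Proof.
rewrite vsetU vset1 -setUA !cardsU1 => /orP[] gS.
  by rewrite in_setU1 gS orbT; case: (_ \notin _).
by rewrite gS; case: (_ \notin _).
Qed.

Lemma M1_circuitP (C : {set E}) : circ C -> C != set0 /\ #|C| = #|vs C| + 1.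
Proof. by case/minsetP=> /andP[-> /eqP->]. Qed.

Lemma M1_circuit_clutter (C D : {set E}) : circ C -> circ D -> D \subset C -> D = C.
Proof. by move=> /minsetP[_ minC] /minsetP[PD _]; apply: minC. Qed.

(* Removing an edge from a minimal set of positive excess drops the excess by at
   most one, so such a set has excess exactly one. *)
Lemma M1_circuit_of_minset (Y : {set E}) : minset (fun X => #|vs X| < #|X|) Y -> circ Y.
Proof.
case/minsetP=> ltY minY.
have tightY : #|Y| = #|vs Y| + 1.
  have [e eY] : exists e, e \in Y by apply/card_gt0P; lia.
  have := cardsD1 e Y; rewrite eY.
  have : #|vs (Y :\ e)| <= #|vs Y| by apply/subset_leq_card/vsetS/subD1set.
  have : #|Y :\ e| <= #|vs (Y :\ e)|.
    rewrite leqNgt; apply/negP=> /minY /(_ (subD1set _ _)) /setP /(_ e).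
    by rewrite eY !inE eqxx.
  lia.
apply/minsetP; split=> [|X /andP[_ /eqP tightX]]; last by apply: minY; rewrite tightX addn1.
by rewrite tightY eqxx andbT -card_gt0; lia.
Qed.

Lemma M1_circuit_exists (X : {set E}) : #|vs X| < #|X| -> exists2 C, circ C & C \subset X.
Proof.
move=> ltX; have [C minC CX] := minset_exists (P := fun X => #|vs X| < #|X|) ltX.
by exists C; first exact: M1_circuit_of_minset.
Qed.

Lemma M1_circuit_proper (C Y : {set E}) : circ C -> Y \subset C -> Y != C -> #|Y| <= #|vs Y|.
Proof.
move=> HC YC YC'; rewrite leqNgt; apply: contra YC' => /M1_circuit_exists[D HD DY].
by rewrite eqEsubset YC -(M1_circuit_clutter HC HD (subset_trans DY YC)).
Qed.

Lemma M1_circuit_card (C : {set E}) : circ C -> 1 < #|C|.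
Proof. by case/M1_circuitP=> /card_vset_gt0; lia. Qed.

Lemma M1_indep_set1 e : m_indep circ [set e].
Proof.
apply/forallP=> C; apply/implyP=> HC; apply/negP=> /subset_leq_card.
by rewrite cards1 leqNgt M1_circuit_card.
Qed.

(* Supermodularity of the excess #|X| - #|vs X|, applied to S and C, whose
   intersection is a proper subset of C and so has nonpositive excess. *)
Lemma M1_excess_setU_circuit (S C : {set E}) c : circ C -> c \in C -> c \notin S ->
  #|S| + #|vs (S :|: C)| < #|S :|: C| + #|vs S|.
Proof.
move=> HC cC cS; have [_ cardC] := M1_circuitP HC.
have SC_C : S :&: C != C by apply: contraNneq cS => SC; move: cC; rewrite -SC inE => /andP[].
have := M1_circuit_proper HC (subsetIr S C) SC_C.
have := subset_leq_card (vsetI_sub S C); have := cardsUI_vset S C; lia.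
Qed.

Lemma M1_circuit_elim (C1 C2 : {set E}) x : circ C1 -> circ C2 -> C1 != C2 ->
  x \in C1 -> x \in C2 -> exists2 C3, circ C3 & C3 \subset (C1 :|: C2) :\ x.
Proof.
move=> H1 H2 C12 xC1 _.
have [c cC1 cC2] : exists2 c, c \in C1 & c \notin C2.
  by apply/subsetPn; apply: contra C12 => /(M1_circuit_clutter H2 H1)->.
apply: M1_circuit_exists.
have := M1_excess_setU_circuit H1 cC1 cC2; rewrite [C2 :|: C1]setUC.
have [_ cardC2] := M1_circuitP H2; have := cardsD1 x (C1 :|: C2); rewrite inE xC1 /=.
have : #|vs ((C1 :|: C2) :\ x)| <= #|vs (C1 :|: C2)| by apply/subset_leq_card/vsetS/subD1set.
lia.
Qed.

Lemma M1_share_circuit_trans a b c :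
  share_circuit circ a b -> share_circuit circ b c -> share_circuit circ a c.
Proof. exact: (share_circuit_trans M1_circuit_clutter M1_circuit_elim). Qed.

Lemma M1_circuit_vset_split (C B : {set E}) : circ C ->
  vs (C :&: B) :&: vs (C :\: B) = set0 -> C :&: B != set0 -> C \subset B.
Proof.
move=> HC disj /set0Pn[x xCB]; apply/negPn/negP => CB.
have CB_C : C :&: B != C by apply: contraNneq CB => <-; rewrite subsetIr.
have CDB_C : C :\: B != C.
  by apply/eqP=> CDB; move: xCB; rewrite -CDB !inE; case: (x \in B); rewrite ?andbF.
have [_ cardC] := M1_circuitP HC.
have := M1_circuit_proper HC (subsetIl C B) CB_C.
have := M1_circuit_proper HC (subsetDl C B) CDB_C.
have := cardsID B C; have := cardsUI (vs (C :&: B)) (vs (C :\: B)).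
rewrite disj cards0 -vsetU setID; lia.
Qed.

Lemma adj_sym : symmetric (adj ends).
Proof. by move=> u w; apply/existsP/existsP=> -[e]; exists e; rewrite orbC. Qed.

Lemma adj_ends e : adj ends (ends e).1 (ends e).2.
Proof. by apply/existsP; exists e; rewrite -surjective_pairing eqxx. Qed.

Lemma connect_incident v e : incident ends v e -> connect (adj ends) v (ends e).1.
Proof.
case/orP=> /eqP <-; first exact: connect0.
by apply: connect1; rewrite adj_sym adj_ends.
Qed.

Lemma M1_circuit_connect (C : {set E}) e f : circ C -> e \in C -> f \in C ->
  connect (adj ends) (ends e).1 (ends f).1.
Proof.
move=> HC eC fC; pose K := [set v | connect (adj ends) (ends e).1 v].
have K_ends x : ((ends x).1 \in K) = ((ends x).2 \in K).
  rewrite !inE; apply/idP/idP => ex; apply: connect_trans ex (connect1 _) => //.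
    exact: adj_ends.
  by rewrite adj_sym adj_ends.
have vsetK (X : {set E}) v : v \in vs X -> exists2 x, x \in X & ((ends x).1 \in K) = (v \in K).
  by rewrite inE => /existsP[x /andP[xX /orP[]/eqP<-]]; exists x; rewrite // K_ends.
pose B := [set x | (ends x).1 \in K].
suff /subsetP/(_ f fC) : C \subset B by rewrite !inE.
apply: M1_circuit_vset_split HC _ _; last by apply/set0Pn; exists e; rewrite !inE eC connect0.
apply/setP=> v; rewrite in_set0 in_setI.
apply/negP=> /andP[/vsetK[x xCB xv] /vsetK[y yCB yv]]; move: xCB yCB.
by rewrite in_setI in_setD [x \in B]inE [y \in B]inE xv yv => /andP[_ ->].
Qed.

Lemma graph_connected_of_share : no_isolated ends ->
  (forall e f, share_circuit circ e f) -> graph_connected ends.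
Proof.
move=> noiso share u w; have [e ue] := noiso u; have [f wf] := noiso w.
have [C [HC eC fC]] := share_circuitP _ _ _ (share e f).
apply: connect_trans (connect_incident ue) _.
apply: connect_trans (M1_circuit_connect HC eC fC) _.
by rewrite (sym_connect_sym adj_sym) connect_incident.
Qed.

Lemma leaf_edge_notin_M1_circuit v e (C : {set E}) :
  [set f | incident ends v f] = [set e] -> circ C -> e \notin C.
Proof.
move=> ve HC; apply/negP=> eC.
have vC : v \in vs C.
  by rewrite inE; apply/existsP; exists e; rewrite eC -[incident _ _ _]inE ve set11.
have vCe : v \notin vs (C :\ e).
  rewrite inE; apply/existsP=> -[x /andP[xCe vx]].
  have : x \in [set e] by rewrite -ve inE.
  by rewrite in_set1 => /eqP xe; rewrite xe !inE eqxx in xCe.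
have Ce : C :\ e != C by apply/eqP=> Ce; move: eC; rewrite -Ce !inE eqxx.
have : #|vs (C :\ e)| < #|vs C|.
  by apply/proper_card/properP; split; [exact/vsetS/subD1set | exists v].
have := M1_circuit_proper HC (subD1set C e) Ce.
have := cardsD1 e C; rewrite eC; have [_ cardC] := M1_circuitP HC; lia.
Qed.

Lemma M1_circuit_notin_cycle (K : {set V}) (C : {set E}) :
  is_cycle_comp ends K -> circ C -> ~~ (C \subset comp_edges ends K).
Proof.
move=> [n [f [g [injf injg g_ends _ ->]]]] HC; apply/negP=> Cg.
have CI : C = g @: (g @^-1: C).
  apply/setP=> x; apply/idP/imsetP=> [xC | [i iI ->]]; last by rewrite inE in iI.
  by have /imsetP[i _ xi] := subsetP Cg x xC; exists i; rewrite // inE -xi.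
have : f @: (g @^-1: C) \subset vs C.
  apply/subsetP=> _ /imsetP[i iI ->]; rewrite inE; apply/existsP; exists (g i).
  rewrite inE in iI; rewrite iI /incident.
  by case: (g_ends i) => ->; rewrite eqxx ?orbT.
move/subset_leq_card; rewrite card_imset // -(card_imset _ injg) -CI.
by have [_ cardC] := M1_circuitP HC; lia.
Qed.

Definition degree v :=
  #|[set e | (ends e).1 == v]| + #|[set e | (ends e).2 == v]|.

Lemma degree_ge2 v : no_isolated ends -> ~ is_leaf ends v -> 1 < degree v.
Proof.
move=> noiso noleaf; rewrite /degree.
set I1 := [set e | (ends e).1 == v]; set I2 := [set e | (ends e).2 == v].
have incE : [set f | incident ends v f] = I1 :|: I2 by apply/setP=> f; rewrite !inE.
have cardI := cardsU I1 I2; rewrite -incE in cardI.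
have [|inc_le1] := ltnP 1 #|[set f | incident ends v f]|; first lia.
have [e ve] := noiso v.
have /cards1P[e' inc_e'] : #|[set f | incident ends v f]| == 1.
  by rewrite eqn_leq inc_le1 card_gt0; apply/set0Pn; exists e; rewrite inE.
have loop_e' : is_loop ends e' by apply/negPn/negP => nl; apply: noleaf; exists e'.
have : e' \in [set f | incident ends v f] by rewrite inc_e' set11.
rewrite inE /incident (eqP loop_e') orbb => /eqP e'v.
have : 0 < #|I1| by apply/card_gt0P; exists e'; rewrite inE (eqP loop_e') e'v.
have : 0 < #|I2| by apply/card_gt0P; exists e'; rewrite inE e'v.
lia.
Qed.

Lemma sum_card_fiber (f : E -> V) (R : {set V}) :
  \sum_(v in R) #|[set e | f e == v]| = #|[set e | f e \in R]|.
Proof.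
rewrite -sum1_card (partition_big f (mem R)) => [|e]; last by rewrite inE.
apply: eq_bigr => v vR; rewrite -sum1_card; apply: eq_bigl => e.
by rewrite !inE; case: eqP => [->|]; rewrite ?vR ?andbF.
Qed.

Lemma sum_degree (R : {set V}) :
  \sum_(v in R) degree v = #|[set e | (ends e).1 \in R]| + #|[set e | (ends e).2 \in R]|.
Proof. by rewrite big_split !sum_card_fiber. Qed.

(* Every vertex missed by S has degree at least 2, but only edges outside S reach
   these vertices, and h reaches them at most once. *)
Lemma card_compl_vset_lt (S : {set E}) h : (forall v, 1 < degree v) ->
  h \notin S -> touches S h -> #|~: vs S| < #|~: S|.
Proof.
move=> deg2 hS touch.
pose A1 := [set e | (ends e).1 \in ~: vs S]; pose A2 := [set e | (ends e).2 \in ~: vs S].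
have lower : #|~: vs S| * 2 <= #|A1| + #|A2|.
  by rewrite -sum_degree -sum_nat_const; apply: leq_sum => v _; exact: deg2.
have [A1S A2S] : A1 \subset ~: S /\ A2 \subset ~: S.
  by split; apply/subsetP=> e; rewrite inE !in_setC; apply: contraNN => /ends_in_vset /andP[].
have hS' : h \in ~: S by rewrite inE.
case/orP: touch => hvS.
- have := ltn_card_missing A1S hS'; rewrite inE in_setC hvS => /(_ isT).
  by have := subset_leq_card A2S; lia.
- have := ltn_card_missing A2S hS'; rewrite inE in_setC hvS => /(_ isT).
  by have := subset_leq_card A1S; lia.
Qed.

Lemma crossing_edge (A : {set V}) a b : a \in A -> b \notin A ->
  connect (adj ends) a b -> exists e, ((ends e).1 \in A) != ((ends e).2 \in A).
Proof.
move=> aA bA ab; apply/existsP; apply: contraLR ab => /existsPn same.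
have clA : closed (adj ends) A.
  move=> x y /existsP[e /orP[]/eqP ee]; move: (same e); rewrite ee negbK => /eqP // ->.
by apply/negP => /(closed_connect clA); rewrite aA (negbTE bA).
Qed.

Lemma touching_edge_outside (X : {set E}) x h : graph_connected ends ->
  x \in X -> h \notin X -> exists2 g, g \notin X & touches X g.
Proof.
move=> conn xX hX; have [|untouched] := boolP (touches X h); first by exists h.
have /andP[x1 _] := ends_in_vset xX.
have h1 : (ends h).1 \notin vs X by move: untouched; rewrite negb_or => /andP[].
have [g g_cross] := crossing_edge x1 h1 (conn _ _).
exists g; first by apply/negP=> /ends_in_vset /andP[g1 g2]; rewrite g1 g2 in g_cross.
by move: g_cross; rewrite /touches; case: ((ends g).1 \in vs X); case: ((ends g).2 \in vs X).
Qed.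

(* The hypothesis says that h is not a coloop of the restriction of M_1(G) to T. *)
Lemma M1_circuit_through (T : {set E}) h : h \in T ->
  (forall S : {set E}, S \subset T :\ h -> #|S| + #|vs T| < #|T| + #|vs S|) ->
  exists2 C, circ C & (C \subset T) && (h \in C).
Proof.
have [n] := ubnP #|T|; elim: n => // n IH in T h *; rewrite ltnS => Tn hT coloop_free.
have [C HC CT] : exists2 C, circ C & C \subset T.
  apply: M1_circuit_exists.
  by have := coloop_free set0 (sub0set _); rewrite vset0 !cards0; lia.
have [hC | hC] := boolP (h \in C); first by exists C; rewrite ?CT ?hC.
have [c cC] := set0Pn _ (M1_circuitP HC).1.
have ch : c != h by apply: contraNneq hC => <-.
have cT : c \in T := subsetP CT c cC.
have [C' HC' /andP[C'T hC']] : exists2 C', circ C' & (C' \subset T :\ c) && (h \in C').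
  apply: IH; first by apply: leq_trans Tn; rewrite (cardsD1 c T) cT.
    by rewrite !inE eq_sym ch.
  move=> S; rewrite !subsetD1 => /andP[/andP[ST cS] hS].
  have SC_T : S :|: C \subset T :\ h by rewrite subsetD1 subUset ST CT !inE negb_or hS.
  have := coloop_free _ SC_T; have := M1_excess_setU_circuit HC cC cS.
  have := cardsD1 c T; rewrite cT.
  have : #|vs (T :\ c)| <= #|vs T| by apply/subset_leq_card/vsetS/subD1set.
  lia.
by exists C'; rewrite ?hC' ?(subset_trans C'T (subD1set _ _)).
Qed.

Lemma M1_circuit_every_edge (C0 : {set E}) h : no_isolated ends ->
  (forall v, 1 < degree v) -> graph_connected ends -> circ C0 ->
  exists2 C, circ C & h \in C.
Proof.
move=> noiso deg2 conn H0; have [hC0 | hC0] := boolP (h \in C0); first by exists C0.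
suff slack (S : {set E}) : h \notin S -> #|~: vs S| < #|~: S|.
  have [|C HC /andP[_ hC]] := M1_circuit_through (in_setT h); last by exists C.
  move=> S; rewrite subsetD1 => /andP[_ /slack].
  by have := cardsC S; have := cardsC (vs S); rewrite vsetT // !cardsT; lia.
move=> hS; rewrite ltnNge; apply/negP => tightS.
(* A largest counterexample M is touched by no edge outside M except h. *)
pose P (S : {set E}) := (h \notin S) && (#|~: S| <= #|~: vs S|).
have PS : P S by rewrite /P hS tightS.
case: (arg_maxnP (fun X : {set E} => #|X|) PS) => M /andP[hM tightM] maxM.
have closedM g : g \notin M -> g != h -> ~~ touches M g.
  move=> gM gh; apply/negP=> touch.
  have : P (g |: M).
    rewrite /P !inE negb_or eq_sym gh hM /=.
    have := card_vset_setU1 touch; have := cardsC (g |: M); have := cardsC (vs (g |: M)).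
    by have := cardsC M; have := cardsC (vs M); rewrite cardsU1 gM; lia.
  by move/maxM; rewrite cardsU1 gM; lia.
have [x xM] : exists x, x \in M.
  apply/set0Pn/negP=> /eqP M0; move: tightM; rewrite M0 vset0 !setC0 !cardsT => EV.
  have : P C0.
    rewrite /P hC0 /=; have [_ cardC0] := M1_circuitP H0.
    by have := cardsC C0; have := cardsC (vs C0); have := max_card (vs C0); lia.
  by move/maxM; rewrite M0 cards0; have := M1_circuit_card H0; lia.
have [g gM touch] := touching_edge_outside conn xM hM.
have /eqP gh : g == h by apply: contraLR touch; exact: closedM gM.
by have := card_compl_vset_lt deg2 hM; rewrite -gh => /(_ touch); lia.
Qed.

Lemma share_circuit_of_common_vertex (D1 D2 : {set E}) g g' v :
  circ D1 -> circ D2 -> g \in D1 -> g' \in D2 -> v \in vs D1 -> v \in vs D2 ->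
  share_circuit circ g g'.
Proof.
move=> H1 H2 gD1 g'D2 vD1 vD2.
have [/set0Pn[x] | /negPn/eqP D12] := boolP (D1 :&: D2 != set0).
  rewrite inE => /andP[xD1 xD2]; apply: (@M1_share_circuit_trans _ x).
    by apply/share_circuitP; exists D1.
  by apply/share_circuitP; exists D2.
have gg' : g != g'.
  by apply/eqP=> gg'; move/setP/(_ g): D12; rewrite !inE gD1 gg' g'D2.
set U := D1 :|: D2.
have [D3 H3] : exists2 D3, circ D3 & D3 \subset (U :\ g) :\ g'.
  apply: M1_circuit_exists.
  have := cardsUI_vset D1 D2; rewrite -/U D12 cards0.
  have : 0 < #|vs D1 :&: vs D2| by apply/card_gt0P; exists v; rewrite inE vD1 vD2.
  have [_ c1] := M1_circuitP H1; have [_ c2] := M1_circuitP H2.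
  have := cardsD1 g U; rewrite inE gD1 /=.
  have := cardsD1 g' (U :\ g); rewrite !inE eq_sym gg' g'D2 orbT /=.
  have : #|vs ((U :\ g) :\ g')| <= #|vs U|.
    by apply/subset_leq_card/vsetS; apply: subset_trans (subD1set _ _) (subD1set _ _).
  lia.
rewrite !subsetD1 => /andP[/andP[D3U gD3] g'D3].
have D3U' : D3 \subset D2 :|: D1 by rewrite setUC.
have [p [pD3 pD1 _]] := circuit_meets_outside M1_circuit_clutter H2 H3 D3U' g'D2 g'D3.
have [q [qD3 qD2 _]] := circuit_meets_outside M1_circuit_clutter H1 H3 D3U gD1 gD3.
apply: (@M1_share_circuit_trans _ p); first by apply/share_circuitP; exists D1.
apply: (@M1_share_circuit_trans _ q); first by apply/share_circuitP; exists D3.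
by apply/share_circuitP; exists D2.
Qed.

Lemma M1_connected_of_cacti : no_isolated ends -> (forall v, ~ is_leaf ends v) ->
  graph_connected ends -> (exists C, circ C) -> m_connected circ.
Proof.
move=> noiso noleaf conn [C0 H0].
have in_circ h := M1_circuit_every_edge h noiso (fun v => degree_ge2 noiso (noleaf v)) conn H0.
have [e0 e0C0] := set0Pn _ (M1_circuitP H0).1.
pose K := [set g | share_circuit circ e0 g].
have e0K : e0 \in K by rewrite inE; apply/share_circuitP; exists C0.
have share_e0 h : share_circuit circ e0 h.
  rewrite -[share_circuit _ _ _]inE; apply/negPn/negP=> hK.
  have [g gK /touchesP[v vK vg]] := touching_edge_outside conn e0K hK.
  move: vK; rewrite inE => /existsP[g' /andP[g'K vg']].
  have e0g' : share_circuit circ e0 g' by rewrite inE in g'K.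
  case/share_circuitP: (e0g') => D1 [H1 _ g'D1].
  have [D2 H2 gD2] := in_circ g.
  have vD1 : v \in vs D1 by rewrite inE; apply/existsP; exists g'; rewrite g'D1.
  have vD2 : v \in vs D2 by rewrite inE; apply/existsP; exists g; rewrite gD2.
  move: gK; rewrite inE => /negP; apply; apply: M1_share_circuit_trans e0g' _.
  exact: share_circuit_of_common_vertex H1 H2 g'D1 gD2 vD1 vD2.
split; first exact: leq_trans (M1_circuit_card H0) (max_card _).
move=> e f _; apply/share_circuitP.
exact: M1_share_circuit_trans (share_circuit_sym (share_e0 e)) (share_e0 f).
Qed.

Lemma cacti_of_M1_connected : no_isolated ends -> m_connected circ ->
  m_nontrivial circ /\ graph_connected ends /\ cacti_graph ends.
Proof.
move=> noiso [cardE conn2]; have [e0 [e1 [_ _ e01]]] := card_gt1P cardE.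
have share_all e f : share_circuit circ e f.
  have [<- | ef] := eqVneq e f; last by apply/share_circuitP; exact: conn2.
  have [g eg] : exists g, e != g.
    by case: (eqVneq e e0) => [-> | ?]; [exists e1 | exists e0].
  have /share_circuitP share_eg : exists C, [/\ circ C, e \in C & g \in C] := conn2 e g eg.
  exact: M1_share_circuit_trans share_eg (share_circuit_sym share_eg).
have in_circ h : exists2 C, circ C & h \in C.
  by case/share_circuitP: (share_all h h) => C [HC hC _]; exists C.
have conn := graph_connected_of_share noiso share_all.
have [C0 H0 _] := in_circ e0.
split; first by split; [exists C0 | exact: m_cocircuit_exists (M1_indep_set1 e0)].
split; first exact: conn.
split=> // [v [e [ve _]] | v cyc].
  by have [C HC eC] := in_circ e; move: (leaf_edge_notin_M1_circuit ve HC); rewrite eC.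
move: (M1_circuit_notin_cycle cyc H0).
have -> : component ends v = setT by apply/setP=> u; rewrite !inE conn.
by move/negP; apply; apply/subsetP=> x _; rewrite !inE.
Qed.

End M1Circuits.

Theorem mainTheorem15 (V E : finType) (ends : E -> V * V)
  (hG : no_isolated ends) :
  (m_nontrivial (M1_circuit ends) /\ graph_connected ends /\ cacti_graph ends)
  <-> m_connected (M1_circuit ends).
Proof.
split=> [[[hasC _] [conn [_ noleaf _]]] | ].
  exact: M1_connected_of_cacti hG noleaf conn hasC.
exact: cacti_of_M1_connected hG.
Qed.
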